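(* Let $m\ge3$ be odd, $s$ a positive integer, $n=sm$, and $\Gamma=C_n[mK_1]$. For $i\in\{2,\dots,n\}$ let $\ell_i=1+\frac{(i-2)(i-1)}{2}$, and define $$\sigma_1=(c,1,1,\dots,1)r,\qquad \sigma_2=(t,tc^{\ell_2},tc^{\ell_3},\dots,tc^{\ell_n})z,\qquad G=\langle\sigma_1,\sigma_2\rangle.$$ Then $\sigma_1$ has order $mn$, $\sigma_2$ has order $2m$, $\sigma_1\sigma_2$ has order $2$, and $|G|=2m^2n$.
   Context: $C_n[mK_1]$ is the graph with vertex set $\{1,\dots,n\}\times\{1,\dots,m\}$ in which $(i_1,j_1)$ is adjacent to $(i_2,j_2)$ if and only if $i_1\equiv i_2\pm1\pmod n$ (residues mod $n$ taken in $\{1,\dots,n\}$). Permutations act on the right ($x\alpha$ is the image of $x$) and products are composed left to right, both in $S_m$ and in $\mathrm{Aut}(\Gamma)$. For $\alpha_1,\dots,\alpha_n\in S_m$ and a permutation $x$ of $\{1,\dots,n\}$ in the dihedral group $D_n=\langle r,z\rangle$, $(\alpha_1,\dots,\alpha_n)x$ denotes the automorphism of $\Gamma$ mapping $(i,j)\mapsto(ix,\,j\alpha_i)$; $1$ denotes an identity permutation. Here $c=(1\,2\,\cdots\,m)\in S_m$; $t\in S_m$ fixes $1$ and maps $j\mapsto m-j+2$ for $2\le j\le m$; $r$ is the permutation $i\mapsto i+1 \pmod n$ of $\{1,\dots,n\}$; and $z$ fixes $1$ and maps $j\mapsto n-j+2$ for $2\le j\le n$. *)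

From mathcomp Require Import all_boot all_fingroup.
Set Implicit Arguments. Unset Strict Implicit. Unset Printing Implicit Defensive.

(* Indices are shifted by one: the paper's i in {1..k} is the ordinal i-1 : 'I_k. *)

(* cyclic shift i |-> i+1 (mod k):  the paper's c (on 'I_m) and r (on 'I_n) *)
Definition rot (k : nat) : {perm 'I_k} := perm (@ordS_inj k).

(* reflection fixing 1, j |-> k-j+2 for 2<=j<=k; 0-based: j0 |-> (k - j0) mod k,
   which equals ordS (rev_ord j0).  The paper's t (on 'I_m) and z (on 'I_n). *)
Definition refl (k : nat) : {perm 'I_k} :=
  perm (inj_comp (@ordS_inj k) (@rev_ord_inj k)).

Definition vtx (n m : nat) := ('I_n * 'I_m)%type.

Definition adj (n m : nat) (u v : vtx n m) : bool :=
  (v.1 == ordS u.1) || (u.1 == ordS v.1).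

Lemma wreath_inj (n m : nat) (alpha : 'I_n -> {perm 'I_m}) (x : {perm 'I_n}) :
  injective (fun u : vtx n m => (x u.1, alpha u.1 u.2)).
Proof.
move=> [i j] [i' j'] /= [] /perm_inj Hi; subst i' => /perm_inj ->; by [].
Qed.

(* (alpha_1,...,alpha_n) x : (i,j) |-> (i x, j alpha_i) *)
Definition wreath (n m : nat) (alpha : 'I_n -> {perm 'I_m}) (x : {perm 'I_n})
  : {perm vtx n m} := perm (@wreath_inj n m alpha x).

(* l_i = 1 + (i-2)(i-1)/2 for the paper's index i = i0+1 >= 2 *)
Definition ell (i0 : nat) : nat := 1 + (i0.-1 * i0) %/ 2.

Definition sigma1 (n m : nat) : {perm vtx n m} :=
  wreath (fun i : 'I_n => if val i == 0 then rot m else 1%g) (rot n).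

Definition sigma2 (n m : nat) : {perm vtx n m} :=
  wreath (fun i : 'I_n => if val i == 0 then refl m
                          else (refl m * rot m ^+ ell i)%g) (refl n).

(* Identify the second coordinate with the ring Z_m.  Every element of G then
   acts as an affine map (i, j) |-> (x i, +-j + f i), and both generators are
   of this form: sigma1 adds 1 to j over i = 1, sigma2 negates j and adds the
   triangular numbers l_i.  Hence sigma1^n is the uniform translation
   rho : j |-> j + 1, and, because m | n and 2 is invertible mod m,
   sigma2^2 is tau : (i, j) |-> (i, j + i - 1) since l_(n+2-i) - l_i = i - 1
   in Z_m.  The relations (sigma1 sigma2)^2 = 1 and
   sigma1 tau = tau sigma1 rho let every b a (b in <sigma2>) be rewritten
   into <sigma1><sigma2>, so G = <sigma1><sigma2>; the two cycles meet
   trivially because <sigma2> fixes the vertex (1, 1) while sigma1^k fixes it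
   only when mn | k. *)

From Pilot Require Import Defs.
From mathcomp Require Import all_boot all_fingroup ssralg finalg zmodp cyclic.
From mathcomp Require Import ring zify.
Set Implicit Arguments. Unset Strict Implicit. Unset Printing Implicit Defensive.
Import GRing.Theory.
Local Open Scope ring_scope.

Section ProductOfCycles.
Local Open Scope group_scope.
Variable gT : finGroupType.

Lemma expg_mul_shift (t x y : gT) :
  commute t y -> t * x = x * y * t -> forall q, t ^+ q * x = x * y ^+ q * t ^+ q.
Proof.
move=> cty txE; elim=> [|q IHq]; first by rewrite !expg0 !mulg1 mul1g.
rewrite !expgS -mulgA IHq !mulgA txE -!mulgA; congr (x * _).
by rewrite (mulgA t) (commuteX q cty) !mulgA.
Qed.

Lemma mulg_cycle_subset (a : gT) (B : {group gT}) :
  {in B, forall k, k * a \in <[a]> * B} -> B * <[a]> \subset <[a]> * B.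
Proof.
move=> Ba; apply/subsetP=> _ /mulsgP[k _ Bk /cycleP[j ->] ->].
elim: j => [|j IHj]; first by rewrite mulg1 -[k]mul1g mem_mulg.
rewrite expgSr mulgA; case/mulsgP: IHj => h k1 Ah Bk1 ->.
rewrite -mulgA; case/mulsgP: (Ba k1 Bk1) => h2 k2 Ah2 Bk2 ->.
by rewrite mulgA mem_mulg ?groupM.
Qed.

Lemma card_gen_cycles (a b : gT) :
  <[a]> :&: <[b]> = 1 -> {in <[b]>, forall k, k * a \in <[a]> * <[b]>} ->
  #|<<[set a; b]>>| = (#[a] * #[b])%N.
Proof.
move=> tiAB Ba.
have cAB : commute <[a]> <[b]>.
  apply/eqP; rewrite eq_sym eqEcard mulg_cycle_subset //=.
  by rewrite TI_cardMg // TI_cardMg 1?setIC // mulnC.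
have -> : <<[set a; b]>> = <[a]> <*> <[b]> by rewrite joing_idl joing_idr.
by rewrite comm_joingE // TI_cardMg.
Qed.

Lemma cycle_mul_mem (a b t p : gT) :
  (a * b) ^+ 2 = 1 -> b ^+ 2 = t -> a * t = t * a * p -> p \in <[a]> ->
  commute t p -> {in <[b]>, forall k, k * a \in <[a]> * <[b]>}.
Proof.
move=> abab bbE atE Ap ctp.
have cap : commute a p by case/cycleP: Ap => k ->; apply/commuteX/commute_refl.
have taE : t * a = a * p^-1 * t.
  by rewrite -mulgA -(commuteV ctp) mulgA atE mulgK.
have taVE : t * a^-1 = a^-1 * p * t.
  apply: (mulgI a); rewrite -(mulgA a^-1) mulKVg mulgA atE -(mulgA t) cap.
  by rewrite mulgA mulgK ctp.
have baE : b * a = a^-1 * b^-1.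
  by apply: (mulgI a); apply: (mulIg b); rewrite mulKVg mulVg -abab expgS expg1 !mulgA.
have tqA x y q : x \in <[a]> -> y \in <[a]> -> commute t y -> t * x = x * y * t ->
    t ^+ q * x \in <[a]> * <[b]>.
  move=> Ax Ay cty txE; rewrite (expg_mul_shift cty txE).
  by rewrite mem_mulg ?groupM ?groupX // -bbE mem_cycle.
move=> _ /cycleP[l ->]; rewrite -(odd_double_half l) expgD -muln2 mulnC expgM bbE.
case: (odd l); rewrite /= ?expg0 ?expg1 ?mul1g; last first.
  by apply: tqA (commuteV ctp) taE; rewrite ?groupV ?cycle_id.
have cbt : commute b t by rewrite -bbE; apply/commuteX/commute_refl.
rewrite (commuteX _ cbt) -mulgA baE mulgA.
have /mulsgP[h k Ah Bk ->] := tqA _ _ l./2 (groupVr (cycle_id a)) Ap ctp taVE.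
by rewrite -mulgA mem_mulg ?groupM ?groupV ?cycle_id.
Qed.

End ProductOfCycles.

Section AffinePerm.
Variables (I : finType) (R : finNzRingType).
Implicit Types (e : bool) (x : {perm I}) (f g : I -> R).

Definition affine_fun e x f (u : I * R) := (x u.1, (-1) ^+ e * u.2 + f u.1).

Lemma affine_fun_inj e x f : injective (affine_fun e x f).
Proof.
move=> [i j] [i' j'] [/perm_inj <-] /addIr /(congr1 ( *%R ((-1) ^+ e))).
by rewrite !mulrA -expr2 sqrr_sign !mul1r => ->.
Qed.

Definition affine_perm e x f : {perm I * R} := perm (@affine_fun_inj e x f).

Lemma affine_permE e x f u : affine_perm e x f u = (x u.1, (-1) ^+ e * u.2 + f u.1).
Proof. by rewrite permE. Qed.

Lemma eq_affine_perm e x f g : f =1 g -> affine_perm e x f = affine_perm e x g.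
Proof. by move=> fg; apply/permP => u; rewrite !affine_permE fg. Qed.

Lemma affine_permM e x f e' y g :
  (affine_perm e x f * affine_perm e' y g)%g =
  affine_perm (e (+) e') (x * y)%g (fun i => (-1) ^+ e' * f i + g (x i)).
Proof.
apply/permP => -[i j]; rewrite permM !affine_permE /= permM.
by rewrite mulrDr mulrA -signr_addb addbC addrA.
Qed.

Lemma affine_perm1 : affine_perm false 1%g (fun _ => 0) = 1%g.
Proof. by apply/permP => -[i j]; rewrite affine_permE !perm1 /= mul1r addr0. Qed.

Lemma affine_perm_expg x f c :
  (affine_perm false x f ^+ c)%g =
  affine_perm false (x ^+ c)%g (fun i => \sum_(k < c) f ((x ^+ k)%g i)).
Proof.
elim: c => [|c IHc].
  by rewrite !expg0 -affine_perm1; apply/eq_affine_perm => i; rewrite big_ord0.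
rewrite expgSr IHc affine_permM expgSr; apply: eq_affine_perm => i.
by rewrite big_ord_recr /= mul1r; congr (_ + _); apply: eq_bigr.
Qed.

Lemma affine_perm_shiftX f c :
  (affine_perm false 1 f ^+ c)%g = affine_perm false 1%g (fun i => f i *+ c).
Proof.
rewrite affine_perm_expg expg1n; apply: eq_affine_perm => i.
under eq_bigr do rewrite expg1n perm1.
by rewrite sumr_const card_ord.
Qed.

Lemma commute_affine_shift f g :
  commute (affine_perm false 1 f) (affine_perm false 1 g).
Proof.
by rewrite /commute !affine_permM; apply: eq_affine_perm => i; rewrite !perm1 !mul1r addrC.
Qed.

Lemma affine_perm_eq1 e x f : affine_perm e x f = 1%g -> x = 1%g.
Proof.
move=> /permP xf1; apply/permP => i.
by have /(congr1 fst) := xf1 (i, 0); rewrite affine_permE !perm1.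
Qed.

End AffinePerm.

Lemma natr_Zp_self p : (p.+2%:R : 'I_p.+2) = 0.
Proof. by apply: val_inj; rewrite Zp_nat /= modnn. Qed.

Lemma natr_Zp_eq0 p k : (k%:R : 'I_p.+2) = 0 -> (p.+2 %| k)%N.
Proof. by move/(congr1 val); rewrite Zp_nat /dvdn => /= ->. Qed.

Lemma rotE k (i : 'I_k.+2) : Defs.rot k.+2 i = i + 1.
Proof. by rewrite permE; apply: val_inj; rewrite /= modnDmr addn1. Qed.

Lemma rotX k (i : 'I_k.+2) c : (Defs.rot k.+2 ^+ c)%g i = i + c%:R.
Proof.
elim: c => [|c IHc]; first by rewrite expg0 perm1 addr0.
by rewrite expgSr permM IHc rotE -addrA -natr1.
Qed.

Lemma reflE k (i : 'I_k.+2) : refl k.+2 i = - i.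
Proof.
apply: val_inj; rewrite permE /=.
have := ltn_ord i; move: (nat_of_ord i) => j lt_jk.
by congr modn; lia.
Qed.

Lemma natr_ell (R : comUnitRingType) k : (2%:R : R) \is a GRing.unit ->
  (ell k)%:R = 1 + (k%:R - 1) * k%:R / 2%:R :> R.
Proof.
move=> u2; rewrite natrD; congr (_ + _); apply: (mulIr u2); rewrite divrK // -natrM.
rewrite divnK; last by rewrite dvdn2 oddM; case: k => //= k; rewrite andbN.
by case: k => [|k]; rewrite ?mulr0 ?mul0n //= natrM -natr1 addrK.
Qed.

Section Generators.
(* N = n.+3 and M = m.+2 give 'I_N and 'I_M their ring structures, and
   N >= 3 makes the reflection of Z_N nontrivial. *)
Variables n m : nat.
Local Notation N := n.+3.
Local Notation M := m.+2.
Hypotheses (odd_M : odd M) (M_dvd_N : (M %| N)%N).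

Local Notation sigma1 := (sigma1 N M).
Local Notation sigma2 := (sigma2 N M).

Definition redM (i : 'I_N) : 'I_M := (val i)%:R.
Definition delta0 (i : 'I_N) : 'I_M := (i == 0)%:R.
Definition ellM (x : 'I_M) : 'I_M := 1 + (x - 1) * x / 2%:R.

Lemma natr_modN k : ((k %% N)%N%:R : 'I_M) = k%:R.
Proof. by apply: val_inj; rewrite !Zp_nat /= modn_dvdm. Qed.

Lemma redMD i j : redM (i + j) = redM i + redM j.
Proof. by rewrite /redM /= natr_modN natrD. Qed.

Lemma redMN i : redM (- i) = - redM i.
Proof.
rewrite /redM /= natr_modN natrB ?(ltnW (ltn_ord i)) //.
by rewrite -[N%:R]natr_modN modnn sub0r.
Qed.

Lemma redM1 : redM 1 = 1.
Proof. by []. Qed.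

Lemma delta0N i : delta0 (- i) = delta0 i.
Proof. by rewrite /delta0 oppr_eq0. Qed.

Lemma sum_delta0_shift i : \sum_(k < N) delta0 (i + k%:R) = 1.
Proof.
under eq_bigr => k _ do rewrite natr_Zp.
rewrite -(reindex_inj (addrI i) (P := xpredT) (F := delta0)) (bigD1 0) //=.
by rewrite big1 ?addr0 // => k /negPf; rewrite /delta0 => ->.
Qed.

Lemma unit2M : (2%:R : 'I_M) \is a GRing.unit.
Proof. by have := @unitZpE M 2 isT; rewrite coprimen2 odd_M. Qed.

Lemma sigma1E : sigma1 = affine_perm false (Defs.rot N) delta0.
Proof.
apply/permP => -[i j]; rewrite affine_permE permE /= mul1r /delta0.
by rewrite -[_ == 0%N]/(i == 0); case: eqP => _; rewrite ?rotE ?perm1 ?addr0.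
Qed.

(* Over i = 0 the paper has t instead of t c^(l_1); ellM (redM 0) = 1 = l_1,
   whence the correction by delta0. *)
Lemma sigma2E :
  sigma2 = affine_perm true (refl N) (fun i => ellM (redM i) - delta0 i).
Proof.
apply/permP => -[i j]; rewrite affine_permE permE /= mulN1r /delta0.
rewrite -[_ == 0%N]/(i == 0); case: eqP => [-> | _]; rewrite ?permM ?reflE ?rotX.
  by rewrite /ellM /redM /= mulr0 mul0r addr0 subrr addr0.
by rewrite natr_ell ?unit2M // subr0.
Qed.

Definition rho : {perm 'I_N * 'I_M} := affine_perm false 1 (fun _ => 1).
Definition tau : {perm 'I_N * 'I_M} := affine_perm false 1 redM.

Lemma rhoX k : (rho ^+ k)%g = affine_perm false 1 (fun _ => k%:R).
Proof. exact: affine_perm_shiftX. Qed.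

Lemma tauX k : (tau ^+ k)%g = affine_perm false 1 (fun i => redM i *+ k).
Proof. exact: affine_perm_shiftX. Qed.

Lemma sigma1_expN : (sigma1 ^+ N)%g = rho.
Proof.
rewrite sigma1E affine_perm_expg.
have -> : (Defs.rot N ^+ N)%g = 1%g.
  by apply/permP => i; rewrite rotX perm1 natr_Zp_self addr0.
apply: eq_affine_perm => i; under eq_bigr do rewrite rotX.
exact: sum_delta0_shift.
Qed.

Lemma sigma2_sqr : (sigma2 ^+ 2)%g = tau.
Proof.
rewrite expgS expg1 sigma2E affine_permM.
have -> : (refl N * refl N)%g = 1%g by apply/permP => i; rewrite permM !reflE opprK perm1.
apply: eq_affine_perm => i; rewrite reflE redMN delta0N /ellM.
by rewrite -[RHS](mulrK unit2M); ring.
Qed.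

Lemma sigma1_sigma2_sqr : ((sigma1 * sigma2) ^+ 2)%g = 1%g.
Proof.
rewrite expgS expg1 sigma1E sigma2E !affine_permM -affine_perm1.
have -> : (Defs.rot N * refl N * (Defs.rot N * refl N))%g = 1%g.
  by apply/permP => i; rewrite !permM !rotE !reflE perm1; ring.
apply: eq_affine_perm => i; rewrite !permM !rotE reflE.
have -> : - (i + 1) + 1 = - i by ring.
rewrite !(redMN, redMD, delta0N) redM1 /ellM; ring.
Qed.

Lemma sigma1_tau : (sigma1 * tau = tau * sigma1 * rho)%g.
Proof.
rewrite sigma1E !affine_permM !mulg1 mul1g; apply: eq_affine_perm => i.
by rewrite !perm1 rotE redMD redM1 !mul1r addrCA addrA.
Qed.

Lemma dvdn_fix_sigma1X k : (sigma1 ^+ k)%g (0, 0) = (0, 0) -> (M * N %| k)%N.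
Proof.
move=> fix0; have /dvdnP[q kE] : (N %| k)%N.
  move/(congr1 fst): fix0; rewrite sigma1E affine_perm_expg affine_permE /= rotX.
  by rewrite add0r => /natr_Zp_eq0.
rewrite kE dvdn_pmul2r //; move: fix0.
rewrite kE mulnC expgM sigma1_expN rhoX affine_permE /= mulr0 add0r.
by case=> _ /natr_Zp_eq0.
Qed.

Lemma sigma1_expMN : (sigma1 ^+ (M * N)%N)%g = 1%g.
Proof. by rewrite mulnC expgM sigma1_expN rhoX natr_Zp_self affine_perm1. Qed.

Lemma order_sigma1 : #[sigma1]%g = (M * N)%N.
Proof.
apply/eqP; rewrite eqn_dvd order_dvdn sigma1_expMN eqxx /=.
by apply: dvdn_fix_sigma1X; rewrite expg_order perm1.
Qed.

Lemma refl_neq1 : refl N != 1%g.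
Proof.
apply/eqP => /permP/(_ 1); rewrite reflE perm1 => /(congr1 val) /=.
by rewrite !modn_small.
Qed.

Lemma sigma2_exp2M : (sigma2 ^+ (2 * M)%N)%g = 1%g.
Proof.
rewrite expgM sigma2_sqr tauX -affine_perm1; apply: eq_affine_perm => i.
by rewrite -mulr_natr natr_Zp_self mulr0.
Qed.

Lemma order_sigma2 : #[sigma2]%g = (2 * M)%N.
Proof.
apply/eqP; rewrite eqn_dvd order_dvdn sigma2_exp2M eqxx /=.
have := expg_order sigma2; move: #[_]%g => k.
rewrite -[k]odd_double_half expgD -muln2 mulnC expgM sigma2_sqr tauX.
case: (odd k) => /=.
  rewrite expg1 sigma2E affine_permM mulg1 => /affine_perm_eq1/eqP.
  by rewrite (negPf refl_neq1).
rewrite expg0 mul1g => /permP/(_ (1, 0)); rewrite affine_permE !perm1 /= mulr0 add0r.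
by case=> /natr_Zp_eq0; rewrite add0n dvdn_pmul2l.
Qed.

Lemma order_sigma1_sigma2 : #[(sigma1 * sigma2)%g]%g = 2.
Proof.
apply/prime_nt_dvdP => //; last by rewrite order_dvdn sigma1_sigma2_sqr.
rewrite order_eq1 sigma1E sigma2E affine_permM.
apply/eqP => /affine_perm_eq1/permP/(_ 0).
by rewrite permM rotE reflE perm1 add0r => /eqP; rewrite oppr_eq0.
Qed.

Lemma sigma2_fix0 : sigma2 (0, 0) = (0, 0).
Proof.
rewrite sigma2E affine_permE /= reflE oppr0 mulr0 add0r /ellM /redM /=.
by rewrite mulr0 mul0r addr0 subrr.
Qed.

Lemma cycles_sigma_TI : (<[sigma1]> :&: <[sigma2]> = 1)%g.
Proof.
apply/trivgP/subsetP => _ /setIP[/cycleP[k ->] /cycleP[l sigma1kE]].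
have fix0 : (sigma1 ^+ k)%g (0, 0) = (0, 0).
  rewrite sigma1kE; elim: l {sigma1kE} => [|l IHl]; first by rewrite expg0 perm1.
  by rewrite expgSr permM IHl sigma2_fix0.
have /dvdnP[q ->] := dvdn_fix_sigma1X fix0.
by rewrite mulnC expgM sigma1_expMN expg1n set11.
Qed.

Lemma card_sigma_group : #|<<[set sigma1; sigma2]>>%g| = (2 * M ^ 2 * N)%N.
Proof.
have rho_in : rho \in <[sigma1]>%g by rewrite -sigma1_expN mem_cycle.
have := cycle_mul_mem sigma1_sigma2_sqr sigma2_sqr sigma1_tau rho_in.
move=> /(_ (commute_affine_shift _ _)) sigma2_sigma1.
by rewrite card_gen_cycles ?cycles_sigma_TI // order_sigma1 order_sigma2; ring.
Qed.

End Generators.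

Local Close Scope ring_scope.

Theorem lemma4p1 (m s : nat) (hm : 3 <= m) (hodd : odd m) (hs : 0 < s) :
  let n := s * m in
  [/\ #[sigma1 n m]%g = m * n,
      #[sigma2 n m]%g = 2 * m,
      #[(sigma1 n m * sigma2 n m)%g]%g = 2
    & #|<<[set sigma1 n m; sigma2 n m]>>%g| = 2 * m ^ 2 * n].
Proof.
case: m hm hodd => [|[|m]] // hm odd_m n.
have [n' nE] : exists n', s * m.+2 = n'.+3 by exists (s * m.+2 - 3); nia.
have M_dvd_N : (m.+2 %| n'.+3)%N by rewrite -nE dvdn_mull.
rewrite /n {n} nE.
split; first exact: order_sigma1.
- exact: order_sigma2.
- exact: order_sigma1_sigma2.
exact: card_sigma_group.
Qed.
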